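(* Let $0<\lambda\le\lambda_0$. Let $\boldsymbol\alpha_0^\star$ be the optimal solution of $\max_{\boldsymbol\alpha\ge\mathbf0}D_{\lambda_0}(\boldsymbol\alpha)$, and let $\boldsymbol\alpha_0\in\mathbb R^{2nK}_{\ge0}$ and $\epsilon\ge0$ satisfy $\|\boldsymbol\alpha_0-\boldsymbol\alpha_0^\star\|_2\le\epsilon$. Let $\mathbf m^\star$ be the optimal solution of $\min_{\mathbf m\ge\mathbf0}P_\lambda(\mathbf m)$. For $k\in[p]$ let $$a=\sum_{i\in[n]}\sum_{l\in\mathcal D_i}(\alpha_0)_{il}\max\{x_{l,k},x_{i,k}\}^2,\qquad b=\sqrt{\sum_{i\in[n]}\Big[\sum_{l\in\mathcal D_i}\max\{x_{i,k},x_{l,k}\}^4+\sum_{j\in\mathcal S_i}\max\{x_{i,k},x_{j,k}\}^4\Big]},$$ $$\lambda'_a=\frac{\lambda_0(2\epsilon b+\|\boldsymbol\alpha_0\|_2b+a)}{2\lambda_0+\|\boldsymbol\alpha_0\|_2b-a}.$$ If $\lambda'_a\le\lambda\le\lambda_0$, then $m^\star_{k'}=0$ for every descendant $k'\supseteq k$.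
   Context: Let $n,K,p\ge1$ be integers, $[n]=\{1,\dots,n\}$. For each $i\in[n]$ let $\mathbf x_i=(x_{i,1},\dots,x_{i,p})^\top\in\mathbb R^p$ have nonnegative entries and let $\mathcal D_i,\mathcal S_i\subseteq[n]$ be sets of size $K$. Put $\mathbf c_{ij}=(\mathbf x_i-\mathbf x_j)\circ(\mathbf x_i-\mathbf x_j)$ (entrywise product). Vectors in $\mathbb R^{2nK}$ are indexed by the pairs $(i,l)$, $l\in\mathcal D_i$ (''different-class pairs'') and $(i,j)$, $j\in\mathcal S_i$ (''same-class pairs''); $\boldsymbol\alpha_0$ has entries $(\alpha_0)_{il},(\alpha_0)_{ij}$. $\mathbf C\in\mathbb R^{p\times2nK}$ has column $\mathbf c_{il}$ for each different-class pair and $-\mathbf c_{ij}$ for each same-class pair. Fix $L\ge U\ge0$, $\eta>0$; let $\mathbf t\in\mathbb R^{2nK}$ have entry $L$ at different-class pairs and $-U$ at same-class pairs; $\ell_s(x)=([s-x]_+)^2$ with $[z]_+=\max\{z,0\}$ (entrywise for vectors); $\mathbf1$ is the all-ones vector. For $\lambda>0$, $$P_\lambda(\mathbf m)=\sum_{i\in[n]}\Big[\sum_{l\in\mathcal D_i}\ell_L(\mathbf m^\top\mathbf c_{il})+\sum_{j\in\mathcal S_i}\ell_{-U}(-\mathbf m^\top\mathbf c_{ij})\Big]+\lambda\Big(\mathbf m^\top\mathbf1+\frac\eta2\|\mathbf m\|_2^2\Big)\ (\mathbf m\in\mathbb R^p_{\ge0}),$$ $$D_\lambda(\boldsymbol\alpha)=-\frac14\|\boldsymbol\alpha\|_2^2+\mathbf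 t^\top\boldsymbol\alpha-\frac{\lambda\eta}2\Big\|\frac1{\lambda\eta}[\mathbf C\boldsymbol\alpha-\lambda\mathbf1]_+\Big\|_2^2\ (\boldsymbol\alpha\in\mathbb R^{2nK}_{\ge0}).$$ The feature indices $[p]$ are nodes of a rooted graph-mining tree: $x_{i,k}=g(\#(H_k\sqsubseteq G_i))$, where $H_k$ is the subgraph at node $k$, $G_i$ the $i$-th input graph, $\#(H\sqsubseteq G)$ the number of non-overlapping occurrences of $H$ in $G$, $g$ nonnegative and nondecreasing, and each node's subgraph is contained in its children's subgraphs. Write $k'\supseteq k$ if $k'$ is a descendant of $k$; in particular $0\le x_{i,k'}\le x_{i,k}$ for all $i$ whenever $k'\supseteq k$. *)

From HB Require Import structures.
From mathcomp Require Import all_boot all_order all_algebra.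
From mathcomp Require Import reals.
Set Implicit Arguments. Unset Strict Implicit. Unset Printing Implicit Defensive.
Import Order.TTheory GRing.Theory Num.Theory.
Local Open Scope ring_scope.

(* Index set of R^{2nK}: triples (b,i,j) with b = true for a different-class
   pair (j \in D i) and b = false for a same-class pair (j \in S i). *)
Definition pairb (n : nat) (D S : 'I_n -> {set 'I_n}) (q : bool * 'I_n * 'I_n) : bool :=
  let: (b, i, j) := q in if b then j \in D i else j \in S i.

Definition pidx (n : nat) (D S : 'I_n -> {set 'I_n}) : finType :=
  {q : bool * 'I_n * 'I_n | pairb D S q}.

Section Defs.
Variables (R : realType) (n p : nat) (x : 'I_n -> 'I_p -> R)
  (D S : 'I_n -> {set 'I_n}).

Definition qb (q : pidx D S) : bool := (sval q).1.1.
Definition qi (q : pidx D S) : 'I_n := (sval q).1.2.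
Definition qj (q : pidx D S) : 'I_n := (sval q).2.

Definition cvec (i j : 'I_n) (k : 'I_p) : R := (x i k - x j k) ^+ 2.

Definition loss (s y : R) : R := (Num.max (s - y) 0) ^+ 2.

Definition dotp (m c : 'I_p -> R) : R := \sum_(k < p) m k * c k.

Definition primal (L U eta lam : R) (m : 'I_p -> R) : R :=
  \sum_(i < n) (\sum_(l in D i) loss L (dotp m (cvec i l))
               + \sum_(j in S i) loss (- U) (- dotp m (cvec i j)))
  + lam * (\sum_(k < p) m k + eta / 2 * \sum_(k < p) m k ^+ 2).

(* column sign of C: +c_il for different-class, -c_ij for same-class *)
Definition sgnq (q : pidx D S) : R := if qb q then 1 else -1.
Definition tvec (L U : R) (q : pidx D S) : R := if qb q then L else - U.

Definition Cmul (al : pidx D S -> R) (k : 'I_p) : R :=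
  \sum_(q : pidx D S) sgnq q * cvec (qi q) (qj q) k * al q.

Definition norm2 (al : pidx D S -> R) : R := Num.sqrt (\sum_(q : pidx D S) al q ^+ 2).

Definition dual (L U eta lam : R) (al : pidx D S -> R) : R :=
  - (1 / 4) * \sum_(q : pidx D S) al q ^+ 2
  + \sum_(q : pidx D S) tvec L U q * al q
  - lam * eta / 2 *
      \sum_(k < p) ((lam * eta)^-1 * Num.max (Cmul al k - lam) 0) ^+ 2.

Definition dual_opt (L U eta lam : R) (al : pidx D S -> R) : Prop :=
  (forall q, 0 <= al q) /\
  (forall be : pidx D S -> R, (forall q, 0 <= be q) ->
     dual L U eta lam be <= dual L U eta lam al).

Definition primal_opt (L U eta lam : R) (m : 'I_p -> R) : Prop :=
  (forall k, 0 <= m k) /\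
  (forall m' : 'I_p -> R, (forall k, 0 <= m' k) ->
     primal L U eta lam m <= primal L U eta lam m').

Definition a_coef (al0 : pidx D S -> R) (k : 'I_p) : R :=
  \sum_(q : pidx D S | qb q) al0 q * (Num.max (x (qj q) k) (x (qi q) k)) ^+ 2.

Definition b_coef (k : 'I_p) : R :=
  Num.sqrt (\sum_(i < n) (\sum_(l in D i) (Num.max (x i k) (x l k)) ^+ 4
                          + \sum_(j in S i) (Num.max (x i k) (x j k)) ^+ 4)).

Definition lam_a (lam0 eps : R) (al0 : pidx D S -> R) (k : 'I_p) : R :=
  lam0 * (2 * eps * b_coef k + norm2 al0 * b_coef k + a_coef al0 k)
  / (2 * lam0 + norm2 al0 * b_coef k - a_coef al0 k).

End Defs.

(* Mining tree on the feature indices: par k = parent of node k.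
   desc par k k' : k' is a descendant of k (reflexive-transitive). *)
Definition desc (p : nat) (par : 'I_p -> option 'I_p) : rel 'I_p :=
  connect [rel a b | par b == Some a].

(* Let α(m) = 2 [t - C^T m]_+ and m(α) = [C α - λ]_+ / (λ η) be the
   KKT maps between primal and dual.  The first-order optimality conditions of P_λ at
   m⋆ and of D_λ0 at α0⋆, each tested at the rescaled other solution, add up to
   <α(m⋆) - α0⋆, α(m⋆)/λ - α0⋆/λ0> <= 0, i.e. α(m⋆) lies in the
   ball with centre (λ0 + λ)/(2 λ0) α0⋆ and radius (λ0 - λ)/(2 λ0) |α0⋆|.
   Features only shrink down the mining tree, so for every descendant k' of k the row k'
   of C is dominated on nonnegative vectors by w, with w_il = max(x_ik, x_lk)^2 on
   different-class pairs and 0 elsewhere; <w, α0> = a and |w| <= b.  Bounding <w, .>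
   on the ball, using |α0 - α0⋆| <= ε, gives (C α(m⋆))_k' <= λ as soon as
   λ >= λ'_a, and then the optimality condition of P_λ in coordinate k' forces
   m⋆_k' = 0. *)

From HB Require Import structures.
From mathcomp Require Import all_boot all_order all_algebra.
From mathcomp Require Import reals.
From mathcomp Require Import ring lra.
Set Implicit Arguments. Unset Strict Implicit. Unset Printing Implicit Defensive.
Import Order.TTheory GRing.Theory Num.Theory.
Local Open Scope ring_scope.

Section RealInequalities.
Variable R : realFieldType.

Lemma ge0_of_quadratic_perturbation (G K : R) : 0 <= K ->
  (forall s, 0 < s -> s <= 1 -> 0 <= s * G + s ^+ 2 * K) -> 0 <= G.
Proof.
move=> K_ge0 small_s; rewrite leNgt; apply/negP => G_lt0.
have KG_gt0 : 0 < K - G by lra.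
pose s := - G / (2 * (K - G)).
have s_gt0 : 0 < s by apply: divr_gt0; lra.
have sKG : s * (2 * (K - G)) = - G by rewrite /s mulfVK //; apply/lt0r_neq0; lra.
have s_le1 : s <= 1 by nra.
have := small_s s s_gt0 s_le1; nra.
Qed.

Lemma sqr_max0_le (a b : R) :
  Num.max b 0 ^+ 2 <= Num.max a 0 ^+ 2 + 2 * Num.max a 0 * (b - a) + (b - a) ^+ 2.
Proof.
have -> : Num.max a 0 ^+ 2 + 2 * Num.max a 0 * (b - a) + (b - a) ^+ 2
  = (Num.max a 0 + (b - a)) ^+ 2 by ring.
case: (leP b 0) => [b_le0|b_gt0]; first by rewrite expr0n sqr_ge0.
by case: (leP a 0) => a0; [rewrite add0r; nra | rewrite addrC subrK].
Qed.

Lemma sqr_subr_le_max (a a' b b' : R) :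
  0 <= a' -> a' <= a -> 0 <= b' -> b' <= b -> (a' - b') ^+ 2 <= Num.max b a ^+ 2.
Proof. by move=> *; case: (leP b a) => ?; nra. Qed.

Lemma sum_sqr_addZ (I : finType) (a b : I -> R) (s : R) :
  \sum_i (a i + s * b i) ^+ 2
  = \sum_i a i ^+ 2 + 2 * s * \sum_i a i * b i + s ^+ 2 * \sum_i b i ^+ 2.
Proof. by rewrite !mulr_sumr -!big_split; apply: eq_bigr => i _ /=; ring. Qed.

End RealInequalities.

Section EuclideanNorm.
Variables (R : rcfType) (I : finType).

Definition l2norm (u : I -> R) : R := Num.sqrt (\sum_i u i ^+ 2).

Lemma l2norm_ge0 u : 0 <= l2norm u. Proof. exact: sqrtr_ge0. Qed.

Lemma sum_sqr_ge0 (u : I -> R) : 0 <= \sum_i u i ^+ 2.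
Proof. by apply: sumr_ge0 => i _; apply: sqr_ge0. Qed.

Lemma sum_CauchySchwarz (w v : I -> R) :
  \sum_i w i * v i <= l2norm w * l2norm v.
Proof.
set X := \sum_i w i ^+ 2; set Y := \sum_i v i ^+ 2; set Z := \sum_i w i * v i.
have lagrange : 2 * (X * Y - Z ^+ 2) = \sum_i \sum_j (w i * v j - w j * v i) ^+ 2.
  have expand i j : (w i * v j - w j * v i) ^+ 2
      = w i ^+ 2 * v j ^+ 2 + w j ^+ 2 * v i ^+ 2 - (w i * v i * (w j * v j)) *+ 2.
    by ring.
  have swap : \sum_i \sum_j w j ^+ 2 * v i ^+ 2 = \sum_i \sum_j w i ^+ 2 * v j ^+ 2.
    exact: exchange_big.
  under [RHS]eq_bigr => i _ do
    rewrite (eq_bigr _ (fun j _ => expand i j)) sumrB big_split sumrMnl /=.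
  rewrite /X /Y /Z expr2 !big_distrlr /= sumrB big_split /= swap sumrMnl.
  ring.
have : Z ^+ 2 <= X * Y.
  have : 0 <= \sum_i \sum_j (w i * v j - w j * v i) ^+ 2.
    by apply: sumr_ge0 => i _; apply: sum_sqr_ge0.
  lra.
rewrite /l2norm -/X -/Y -sqrtrM ?sum_sqr_ge0 // => ZXY.
apply: le_trans (ler_norm _) _.
by rewrite -sqrtr_sqr ler_sqrt // mulr_ge0 ?sum_sqr_ge0.
Qed.

Lemma l2normBC (u v : I -> R) :
  l2norm (fun i => u i - v i) = l2norm (fun i => v i - u i).
Proof. by congr Num.sqrt; apply: eq_bigr => i _; rewrite -opprB sqrrN. Qed.

Lemma l2normD (u v : I -> R) :
  l2norm (fun i => u i + v i) <= l2norm u + l2norm v.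
Proof.
rewrite -(ger0_norm (addr_ge0 (l2norm_ge0 u) (l2norm_ge0 v))) -sqrtr_sqr.
rewrite ler_sqrt ?sqr_ge0 // sqrrD !sqr_sqrtr ?sum_sqr_ge0 //.
under eq_bigr do rewrite -[v _]mul1r.
rewrite sum_sqr_addZ expr1n mulr1 mul1r.
have := sum_CauchySchwarz u v; lra.
Qed.

Lemma dot_le_of_ball (w al al0s al0 : I -> R) (c r eps b : R) :
  0 <= c -> 0 <= r -> c + r = 1 ->
  l2norm (fun i => al i - c * al0s i) <= r * l2norm al0s ->
  l2norm (fun i => al0 i - al0s i) <= eps -> l2norm w <= b ->
  \sum_i w i * al i <= c * \sum_i w i * al0 i + b * (eps + r * l2norm al0).
Proof.
move=> c_ge0 r_ge0 cr ball near w_le.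
have split_al : \sum_i w i * al i
    = c * \sum_i w i * al0 i + c * \sum_i w i * (al0s i - al0 i)
      + \sum_i w i * (al i - c * al0s i).
  by rewrite -!mulrDr -!big_split /= mulr_sumr -big_split; apply: eq_bigr => i _ /=; ring.
have near' : l2norm (fun i => al0s i - al0 i) <= eps by rewrite l2normBC.
have al0s_le : l2norm al0s <= l2norm al0 + eps.
  have := l2normD al0 (fun i => al0s i - al0 i).
  have -> : l2norm (fun i => al0 i + (al0s i - al0 i)) = l2norm al0s.
    by congr Num.sqrt; apply: eq_bigr => i _; rewrite addrC subrK.
  lra.
have w_ge0 := l2norm_ge0 w.
have eps_ge0 : 0 <= eps := le_trans (l2norm_ge0 _) near.
have near_term : \sum_i w i * (al0s i - al0 i) <= l2norm w * eps.
  exact: le_trans (sum_CauchySchwarz _ _) (ler_wpM2l w_ge0 near').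
have ball_term : \sum_i w i * (al i - c * al0s i) <= l2norm w * (r * (l2norm al0 + eps)).
  apply: le_trans (sum_CauchySchwarz _ _) (ler_wpM2l w_ge0 _).
  exact: le_trans ball (ler_wpM2l r_ge0 al0s_le).
have collect : c * (l2norm w * eps) + l2norm w * (r * (l2norm al0 + eps))
    = l2norm w * (eps + r * l2norm al0).
  have -> : c = 1 - r by lra.
  ring.
have b_term : l2norm w * (eps + r * l2norm al0) <= b * (eps + r * l2norm al0).
  by apply: ler_wpM2r w_le; apply: addr_ge0 => //; apply: mulr_ge0 => //; apply: l2norm_ge0.
have := ler_wpM2l c_ge0 near_term.
rewrite split_al; lra.
Qed.

End EuclideanNorm.

Lemma desc_leq (p : nat) (par : 'I_p -> option 'I_p) (f : 'I_p -> nat) :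
  (forall c k, par c = Some k -> (f c <= f k)%N) ->
  forall k k', desc par k k' -> (f k' <= f k)%N.
Proof.
move=> f_par k k' /connectP [s path_s ->].
elim: s k path_s => [|k1 s IHs] k //= /andP [/eqP par_k1 path_s].
exact: leq_trans (IHs k1 path_s) (f_par _ _ par_k1).
Qed.

Section MetricLearning.
Variables (R : realType) (n p : nat) (x : 'I_n -> 'I_p -> R).
Variables (D S : 'I_n -> {set 'I_n}) (L U eta : R).
Hypothesis eta_gt0 : 0 < eta.

Definition Ctmul (m : 'I_p -> R) (q : pidx D S) : R :=
  sgnq R q * dotp m (cvec x (qi q) (qj q)).

Definition kkt_dual (m : 'I_p -> R) (q : pidx D S) : R :=
  2 * Num.max (tvec L U q - Ctmul m q) 0.

Definition kkt_primal (lam : R) (al : pidx D S -> R) (k : 'I_p) : R :=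
  (lam * eta)^-1 * Num.max (Cmul x al k - lam) 0.

Lemma kkt_dual_ge0 (m : 'I_p -> R) q : 0 <= kkt_dual m q.
Proof. by rewrite mulr_ge0 // le_max lexx orbT. Qed.

Lemma kkt_primal_ge0 (lam : R) (al : pidx D S -> R) :
  0 < lam -> forall k, 0 <= kkt_primal lam al k.
Proof.
by move=> lam_gt0 k; rewrite mulr_ge0 ?le_max ?lexx ?orbT // invr_ge0 mulr_ge0 // ltW.
Qed.

Lemma sum_pidxE (F : bool -> 'I_n -> 'I_n -> R) :
  \sum_(q : pidx D S) F (qb q) (qi q) (qj q)
  = \sum_i (\sum_(l in D i) F true i l + \sum_(j in S i) F false i j).
Proof.
pose G (v : bool * 'I_n * 'I_n) := F v.1.1 v.1.2 v.2.
have -> : \sum_(q : pidx D S) F (qb q) (qi q) (qj q) = \sum_(v | pairb D S v) G v.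
  rewrite (reindex_omap (val : pidx D S -> _) insub) => [|v Pv]; last by rewrite insubT.
  by symmetry; apply: eq_bigl => -[v Pv] /=; rewrite Pv insubT /= eqxx.
transitivity (\sum_(bi : bool * 'I_n) \sum_(j | pairb D S (bi.1, bi.2, j)) G (bi, j)).
  by rewrite pair_big_dep; apply: eq_big => -[[b i] j].
rewrite -(pair_big xpredT xpredT (fun b i => \sum_(j | pairb D S (b, i, j)) G (b, i, j))).
by rewrite big_bool -big_split.
Qed.

Lemma primalE (lam : R) (m : 'I_p -> R) :
  primal x D S L U eta lam m
  = \sum_(q : pidx D S) loss (tvec L U q) (Ctmul m q)
    + lam * (\sum_k m k + eta / 2 * \sum_k m k ^+ 2).
Proof.
pose F b i j := loss (if b then L else - U) ((if b then 1 else -1) * dotp m (cvec x i j)).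
rewrite /primal (sum_pidxE F); congr (_ + _).
apply: eq_bigr => i _; rewrite /F /=.
by congr (_ + _); apply: eq_bigr => l _; rewrite ?mul1r ?mulN1r.
Qed.

Lemma Cmul_adjoint (al : pidx D S -> R) (m : 'I_p -> R) :
  \sum_q al q * Ctmul m q = \sum_k m k * Cmul x al k.
Proof.
rewrite /Cmul /Ctmul /dotp.
under eq_bigr => q _ do rewrite !mulr_sumr.
rewrite exchange_big /=; apply: eq_bigr => k _; rewrite mulr_sumr.
by apply: eq_bigr => q _; ring.
Qed.

Lemma CmulDZ (al be : pidx D S -> R) (s : R) k :
  Cmul x (fun q => al q + s * be q) k = Cmul x al k + s * Cmul x be k.
Proof. by rewrite /Cmul mulr_sumr -big_split; apply: eq_bigr => q _ /=; ring. Qed.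

Lemma CmulB (al be : pidx D S -> R) k :
  Cmul x (fun q => be q - al q) k = Cmul x be k - Cmul x al k.
Proof. by rewrite /Cmul -sumrB; apply: eq_bigr => q _ /=; ring. Qed.

Lemma CmulZ (al : pidx D S -> R) (s : R) k :
  Cmul x (fun q => s * al q) k = s * Cmul x al k.
Proof. by rewrite /Cmul mulr_sumr; apply: eq_bigr => q _ /=; ring. Qed.

Lemma CtmulDZ (m d : 'I_p -> R) (s : R) q :
  Ctmul (fun k => m k + s * d k) q = Ctmul m q + s * Ctmul d q.
Proof. by rewrite /Ctmul /dotp !mulr_sumr -big_split; apply: eq_bigr => k _ /=; ring. Qed.

Lemma primal_opt_first_order (lam : R) (ms m : 'I_p -> R) :
  0 <= lam -> primal_opt x D S L U eta lam ms -> (forall k, 0 <= m k) ->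
  0 <= \sum_k (lam + lam * eta * ms k - Cmul x (kkt_dual ms) k) * (m k - ms k).
Proof.
move=> lam_ge0 [ms_ge0 ms_min] m_ge0.
pose d k := m k - ms k.
pose e q := Ctmul d q.
have K_ge0 : 0 <= \sum_q e q ^+ 2 + lam * eta / 2 * \sum_k d k ^+ 2.
  apply: addr_ge0 (sum_sqr_ge0 _) (mulr_ge0 _ (sum_sqr_ge0 _)).
  by rewrite divr_ge0 // mulr_ge0 // ltW.
apply: (ge0_of_quadratic_perturbation K_ge0) => s s_gt0 s_le1.
pose ms' k := ms k + s * d k.
have ms'_ge0 k : 0 <= ms' k by have := ms_ge0 k; have := m_ge0 k; rewrite /ms' /d; nra.
have loss_le : \sum_q loss (tvec L U q) (Ctmul ms' q)
    <= \sum_q loss (tvec L U q) (Ctmul ms q)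
       - s * \sum_q kkt_dual ms q * e q + s ^+ 2 * \sum_q e q ^+ 2.
  rewrite !mulr_sumr -sumrN -!big_split /=; apply: ler_sum => q _.
  rewrite /ms' CtmulDZ /loss /kkt_dual.
  have := sqr_max0_le (tvec L U q - Ctmul ms q) (tvec L U q - (Ctmul ms q + s * e q)).
  lra.
have sum_ms' : \sum_k ms' k = \sum_k ms k + s * \sum_k d k by rewrite big_split mulr_sumr.
have := ms_min ms' ms'_ge0.
rewrite !primalE sum_ms' sum_sqr_addZ /e Cmul_adjoint in loss_le *.
have -> : \sum_k (lam + lam * eta * ms k - Cmul x (kkt_dual ms) k) * (m k - ms k)
    = lam * \sum_k d k + lam * eta * \sum_k ms k * d k - \sum_k d k * Cmul x (kkt_dual ms) k.
  by rewrite !mulr_sumr -big_split -sumrB; apply: eq_bigr => k _ /=; rewrite /d; ring.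
lra.
Qed.

Lemma dual_opt_first_order (lam : R) (al0 be : pidx D S -> R) :
  0 < lam -> dual_opt x L U eta lam al0 -> (forall q, 0 <= be q) ->
  0 <= \sum_q (al0 q / 2 - tvec L U q) * (be q - al0 q)
       + \sum_k kkt_primal lam al0 k * (Cmul x be k - Cmul x al0 k).
Proof.
move=> lam_gt0 [al0_ge0 al0_max] be_ge0.
pose d q := be q - al0 q.
pose c := (lam * eta)^-1.
have c_gt0 : 0 < c by rewrite invr_gt0 mulr_gt0.
have scale z : lam * eta / 2 * (c * z) ^+ 2 = c / 2 * z ^+ 2.
  by rewrite /c; field; rewrite !lt0r_neq0.
have K_ge0 : 0 <= 1 / 4 * \sum_q d q ^+ 2 + c / 2 * \sum_k Cmul x d k ^+ 2.
  by apply: addr_ge0; apply: mulr_ge0; rewrite ?sum_sqr_ge0 //; lra.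
apply: (ge0_of_quadratic_perturbation K_ge0) => s s_gt0 s_le1.
pose al' q := al0 q + s * d q.
have al'_ge0 q : 0 <= al' q by have := al0_ge0 q; have := be_ge0 q; rewrite /al' /d; nra.
have penalty_le : lam * eta / 2 * \sum_k (c * Num.max (Cmul x al' k - lam) 0) ^+ 2
    <= lam * eta / 2 * \sum_k (c * Num.max (Cmul x al0 k - lam) 0) ^+ 2
       + s * \sum_k kkt_primal lam al0 k * Cmul x d k
       + s ^+ 2 * (c / 2 * \sum_k Cmul x d k ^+ 2).
  rewrite !mulr_sumr -!big_split /=; apply: ler_sum => k _.
  rewrite !scale /al' CmulDZ /kkt_primal -/c.
  have := ler_wpM2l (ltW (divr_gt0 c_gt0 (ltr0Sn R 1)))
            (sqr_max0_le (Cmul x al0 k - lam) (Cmul x al0 k + s * Cmul x d k - lam)).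
  lra.
have := al0_max al' al'_ge0.
rewrite /dual /al' sum_sqr_addZ -/c.
have -> : \sum_q tvec L U q * (al0 q + s * d q)
    = \sum_q tvec L U q * al0 q + s * \sum_q tvec L U q * d q.
  by rewrite mulr_sumr -big_split; apply: eq_bigr => q _ /=; ring.
have -> : \sum_q (al0 q / 2 - tvec L U q) * (be q - al0 q)
    = 1 / 2 * \sum_q al0 q * d q - \sum_q tvec L U q * d q.
  by rewrite mulr_sumr -sumrB; apply: eq_bigr => q _ /=; rewrite /d; ring.
rewrite [X in _ -> 0 <= s * (_ + X) + _]
  (eq_bigr (fun k => kkt_primal lam al0 k * Cmul x d k)) => [|k _]; last by rewrite CmulB.
rewrite /al' in penalty_le; lra.
Qed.

Lemma kkt_dual_complementary (m : 'I_p -> R) (be : pidx D S -> R) :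
  (forall q, 0 <= be q) ->
  0 <= \sum_q (kkt_dual m q / 2 - tvec L U q) * (be q - kkt_dual m q)
       + \sum_k m k * (Cmul x be k - Cmul x (kkt_dual m) k).
Proof.
move=> be_ge0.
rewrite [X in 0 <= _ + X](eq_bigr (fun k => m k * Cmul x (fun q => be q - kkt_dual m q) k)).
  rewrite -Cmul_adjoint -big_split /=; apply: sumr_ge0 => q _.
  rewrite /kkt_dual; have := be_ge0 q.
  by case: (leP (tvec L U q - Ctmul m q) 0) => ?; nra.
by move=> k _; rewrite CmulB.
Qed.

Lemma kkt_primal_first_order (lam : R) (al : pidx D S -> R) (m : 'I_p -> R) :
  0 < lam -> (forall k, 0 <= m k) ->
  0 <= \sum_k (lam + lam * eta * kkt_primal lam al k - Cmul x al k)
              * (m k - kkt_primal lam al k).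
Proof.
move=> lam_gt0 m_ge0; apply: sumr_ge0 => k _; rewrite /kkt_primal.
have le_ne0 : lam * eta != 0 by rewrite lt0r_neq0 // mulr_gt0.
case: (leP (Cmul x al k - lam) 0) => C_le.
  by rewrite mulr0 mulr0 addr0 subr0; apply: mulr_ge0 => //; lra.
by rewrite mulrA mulfV // mul1r subrKC subrr mul0r.
Qed.

Lemma kkt_dual_monotone (lam lam0 : R) (ms : 'I_p -> R) (al0 : pidx D S -> R) :
  0 < lam -> 0 < lam0 ->
  primal_opt x D S L U eta lam ms -> dual_opt x L U eta lam0 al0 ->
  \sum_q (kkt_dual ms q - al0 q) * (kkt_dual ms q / lam - al0 q / lam0) <= 0.
Proof.
move=> lam_gt0 lam0_gt0 ms_opt al0_opt.
have [ms_ge0 _] := ms_opt; have [al0_ge0 _] := al0_opt.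
have lam_neq0 := lt0r_neq0 lam_gt0; have lam0_neq0 := lt0r_neq0 lam0_gt0.
have scaled_ge0 (c : R) (al : pidx D S -> R) :
    0 < c -> (forall q, 0 <= al q) -> forall q, 0 <= c * al q.
  by move=> c_gt0 al_ge0 q; exact: mulr_ge0 (ltW c_gt0) (al_ge0 q).
have := kkt_dual_complementary ms (scaled_ge0 _ _ (divr_gt0 lam_gt0 lam0_gt0) al0_ge0).
under [X in 0 <= _ + X -> _]eq_bigr do rewrite CmulZ; move=> comp.
have := dual_opt_first_order lam0_gt0 al0_opt
  (scaled_ge0 _ _ (divr_gt0 lam0_gt0 lam_gt0) (kkt_dual_ge0 ms)).
under [X in 0 <= _ + X -> _]eq_bigr do rewrite CmulZ; move=> vi_dual.
have vi_primal := primal_opt_first_order (ltW lam_gt0) ms_opt (kkt_primal_ge0 al0 lam0_gt0).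
have vi_m0 := kkt_primal_first_order al0 lam0_gt0 ms_ge0.
set al := kkt_dual ms in comp vi_dual vi_primal *.
set m0 := kkt_primal lam0 al0 in vi_dual vi_primal vi_m0 *.
set Q1 := \sum_q _ in comp; set K1 := \sum_k _ in comp.
set Q2 := \sum_q _ in vi_dual; set K2 := \sum_k _ in vi_dual.
set T1 := \sum_k _ in vi_primal; set T2 := \sum_k _ in vi_m0.
have dual_part : \sum_q (al q - al0 q) * (al q / lam - al0 q / lam0)
    = - 2 * (lam^-1 * Q1 + lam0^-1 * Q2).
  rewrite /Q1 /Q2 mulrDr !mulr_sumr -big_split; apply: eq_bigr => q _ /=.
  by field; rewrite lam_neq0 lam0_neq0.
have primal_part : lam^-1 * K1 + lam0^-1 * K2 + lam^-1 * T1 + lam0^-1 * T2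
    = - eta * \sum_k (m0 k - ms k) ^+ 2.
  rewrite /K1 /K2 /T1 /T2 !mulr_sumr -!big_split; apply: eq_bigr => k _ /=.
  by field; rewrite lam_neq0 lam0_neq0.
have : 0 <= lam^-1 * (Q1 + K1) + lam0^-1 * (Q2 + K2) + lam^-1 * T1 + lam0^-1 * T2.
  by rewrite !addr_ge0 // mulr_ge0 // invr_ge0 ltW.
have := mulr_ge0 (ltW eta_gt0) (sum_sqr_ge0 (fun k => m0 k - ms k)).
rewrite dual_part; lra.
Qed.

Lemma kkt_dual_ball (lam lam0 : R) (ms : 'I_p -> R) (al0 : pidx D S -> R) :
  0 < lam -> lam <= lam0 ->
  primal_opt x D S L U eta lam ms -> dual_opt x L U eta lam0 al0 ->
  l2norm (fun q => kkt_dual ms q - (lam0 + lam) / (2 * lam0) * al0 q)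
  <= (lam0 - lam) / (2 * lam0) * l2norm al0.
Proof.
move=> lam_gt0 lam_le ms_opt al0_opt; have lam0_gt0 := lt_le_trans lam_gt0 lam_le.
have r_ge0 : 0 <= (lam0 - lam) / (2 * lam0) by rewrite divr_ge0 // ?subr_ge0 // mulr_ge0 // ltW.
rewrite /l2norm -(ger0_norm r_ge0) -sqrtr_sqr -sqrtrM ?sqr_ge0 // ler_sqrt; last first.
  by rewrite mulr_ge0 ?sqr_ge0 ?sum_sqr_ge0.
have := kkt_dual_monotone lam_gt0 lam0_gt0 ms_opt al0_opt.
have -> : \sum_q (kkt_dual ms q - (lam0 + lam) / (2 * lam0) * al0 q) ^+ 2
    = ((lam0 - lam) / (2 * lam0)) ^+ 2 * \sum_q al0 q ^+ 2
      + lam * \sum_q (kkt_dual ms q - al0 q) * (kkt_dual ms q / lam - al0 q / lam0).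
  rewrite !mulr_sumr -big_split; apply: eq_bigr => q _ /=.
  by field; rewrite !lt0r_neq0.
by rewrite gerDl pmulr_rle0.
Qed.

Lemma primal_opt_eq0 (lam : R) (ms : 'I_p -> R) (k : 'I_p) :
  0 < lam -> primal_opt x D S L U eta lam ms ->
  Cmul x (kkt_dual ms) k <= lam -> ms k = 0.
Proof.
move=> lam_gt0 ms_opt C_le; have ms_ge0 := ms_opt.1.
pose m j := if j == k then 0 else ms j.
have m_ge0 j : 0 <= m j by rewrite /m; case: (j == k).
have := primal_opt_first_order (ltW lam_gt0) ms_opt m_ge0.
rewrite (bigD1 k) //= big1 => [|j /negbTE j_neq]; last by rewrite /m j_neq subrr mulr0.
rewrite /m eqxx addr0 sub0r => vi.
have slack : 0 <= (lam - Cmul x (kkt_dual ms) k) * ms k by rewrite mulr_ge0 ?subr_ge0.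
apply/eqP; rewrite eq_le ms_ge0 andbT leNgt; apply/negP => ms_gt0.
have := mulr_gt0 (mulr_gt0 lam_gt0 eta_gt0) (mulr_gt0 ms_gt0 ms_gt0); lra.
Qed.

Definition row_bound (k : 'I_p) (q : pidx D S) : R :=
  if qb q then Num.max (x (qj q) k) (x (qi q) k) ^+ 2 else 0.

Lemma a_coefE (al0 : pidx D S -> R) k : a_coef x al0 k = \sum_q row_bound k q * al0 q.
Proof.
rewrite /a_coef big_mkcond; apply: eq_bigr => q _.
by rewrite /row_bound; case: (qb q); rewrite ?mul0r // mulrC.
Qed.

Lemma row_bound_norm_le k : l2norm (row_bound k) <= b_coef x D S k.
Proof.
pose F (b : bool) i j := Num.max (x i k) (x j k) ^+ 4.
have F_ge0 b i j : 0 <= F b i j by rewrite /F (_ : 4 = 2 * 2)%N // exprM sqr_ge0.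
rewrite /b_coef -(sum_pidxE F) ler_sqrt ?sumr_ge0 //.
apply: ler_sum => q _; rewrite /row_bound; case: (qb q).
  by rewrite -exprM maxC.
by rewrite expr0n F_ge0.
Qed.

Lemma Cmul_le_row_bound (al : pidx D S -> R) (k k' : 'I_p) :
  (forall i, 0 <= x i k') -> (forall i, x i k' <= x i k) -> (forall q, 0 <= al q) ->
  Cmul x al k' <= \sum_q row_bound k q * al q.
Proof.
move=> x_ge0 x_le al_ge0; apply: ler_sum => q _.
rewrite /sgnq /row_bound /cvec; case: (qb q).
  by rewrite mul1r ler_wpM2r // sqr_subr_le_max.
by rewrite mul0r mulN1r mulNr oppr_le0 mulr_ge0 ?sqr_ge0.
Qed.

Lemma kkt_dual_screening (lam lam0 eps : R) (ms : 'I_p -> R) (al0s al0 : pidx D S -> R)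
    (k k' : 'I_p) :
  (forall i, 0 <= x i k') -> (forall i, x i k' <= x i k) ->
  0 < lam -> lam <= lam0 ->
  primal_opt x D S L U eta lam ms -> dual_opt x L U eta lam0 al0s ->
  norm2 (fun q => al0 q - al0s q) <= eps -> lam_a x lam0 eps al0 k <= lam ->
  Cmul x (kkt_dual ms) k' <= lam.
Proof.
move=> x_ge0 x_le lam_gt0 lam_le ms_opt al0s_opt near lam_a_le.
have lam0_gt0 := lt_le_trans lam_gt0 lam_le.
set a := a_coef x al0 k; set b := b_coef x D S k; set N := norm2 al0.
have w_le := row_bound_norm_le k.
have a_le : a <= b * N.
  rewrite /a a_coefE; apply: le_trans (sum_CauchySchwarz _ _) _.
  by rewrite ler_wpM2r ?l2norm_ge0.
have den_gt0 : 0 < 2 * lam0 + N * b - a by rewrite mulrC; lra.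
move: lam_a_le; rewrite /lam_a -/a -/b -/N ler_pdivrMr // => lam_a_le.
apply: le_trans (Cmul_le_row_bound x_ge0 x_le (kkt_dual_ge0 ms)) _.
apply: le_trans (dot_le_of_ball _ _ _ (kkt_dual_ball lam_gt0 lam_le ms_opt al0s_opt) near w_le) _.
- by rewrite divr_ge0 // ?addr_ge0 ?mulr_ge0 // ltW // (lt_le_trans lam_gt0).
- by rewrite divr_ge0 ?subr_ge0 ?mulr_ge0 // ltW.
- by field; rewrite lt0r_neq0.
rewrite -a_coefE -/a -/N.
rewrite -(ler_pM2l (mulr_gt0 (ltr0Sn R 1) lam0_gt0)).
have -> : 2 * lam0 * ((lam0 + lam) / (2 * lam0) * a + b * (eps + (lam0 - lam) / (2 * lam0) * N))
    = lam0 * (2 * eps * b + N * b + a) + lam * (a - N * b).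
  by field; rewrite lt0r_neq0.
lra.
Qed.

End MetricLearning.

Theorem theorem7 (R : realType) (n K p : nat)
  (D S : 'I_n -> {set 'I_n})
  (cnt : 'I_n -> 'I_p -> nat) (g : nat -> R) (x : 'I_n -> 'I_p -> R)
  (par : 'I_p -> option 'I_p) (root : 'I_p)
  (L U eta lam lam0 eps : R)
  (al0s al0 : pidx D S -> R) (ms : 'I_p -> R) (k : 'I_p) :
  (0 < n)%N -> (0 < K)%N -> (0 < p)%N ->
  (forall i, #|D i| = K) -> (forall i, #|S i| = K) ->
  (* graph-mining features x_{i,k} = g(#(H_k in G_i)) *)
  (forall c, 0 <= g c) -> (forall c1 c2, (c1 <= c2)%N -> g c1 <= g c2) ->
  (forall i k0, x i k0 = g (cnt i k0)) ->
  (* rooted tree; occurrence counts are nonincreasing from parent to child *)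
  par root = None -> (forall k0, par k0 = None -> k0 = root) ->
  (forall k0, desc par root k0) ->
  (forall i c k0, par c = Some k0 -> (cnt i c <= cnt i k0)%N) ->
  0 <= U -> U <= L -> 0 < eta ->
  0 < lam -> lam <= lam0 ->
  dual_opt x L U eta lam0 al0s ->
  (forall q, 0 <= al0 q) -> 0 <= eps ->
  norm2 (fun q => al0 q - al0s q) <= eps ->
  primal_opt x D S L U eta lam ms ->
  lam_a x lam0 eps al0 k <= lam -> lam <= lam0 ->
  forall k', desc par k k' -> ms k' = 0.
Proof.
move=> _ _ _ _ _ g_ge0 g_mono x_def _ _ _ cnt_par _ _ eta_gt0 lam_gt0 lam_le
  al0s_opt _ _ near ms_opt lam_a_le _ k' k_k'.
have x_ge0 i : 0 <= x i k' by rewrite x_def.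
have x_le i : x i k' <= x i k.
  by rewrite !x_def g_mono // (desc_leq (cnt_par i) k_k').
apply: (primal_opt_eq0 eta_gt0 lam_gt0 ms_opt).
exact: kkt_dual_screening x_ge0 x_le lam_gt0 lam_le ms_opt al0s_opt near lam_a_le.
Qed.
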